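(* For every integer $n\ge 0$, $$\Phi^{(1)}[aq^n; b, b'; c; x, y] = \sum_{k=0}^n \sum_{i=0}^k \begin{bmatrix} n \\ k \end{bmatrix} \begin{bmatrix} k \\ i \end{bmatrix} \frac{(b; q)_{k-i} (b'; q)_i}{(c; q)_k} q^{2\binom{k}{2}} a^k x^{k-i} y^i\, \Phi^{(1)}[aq^k; bq^{k-i}, b'q^i; cq^k; xq^i, y]$$ and $$\Phi^{(1)}[aq^{-n}; b, b'; c; x, y] = \sum_{k=0}^n \sum_{i=0}^k \begin{bmatrix} n \\ k \end{bmatrix} \begin{bmatrix} k \\ i \end{bmatrix} \frac{(b; q)_{k-i} (b'; q)_i}{(c; q)_k} q^{\binom{k}{2} - nk} (-a)^k x^{k-i} y^i\, \Phi^{(1)}[a; bq^{k-i}, b'q^i; cq^k; xq^i, y].$$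
   Context: Let $q$ be a complex number with $0<|q|<1$. For complex $z$ and integer $m\ge 0$, $(z;q)_m=\prod_{j=0}^{m-1}(1-zq^j)$, with $(z;q)_0=1$. For integers $0\le k\le n$, $\begin{bmatrix} n \\ k \end{bmatrix}=\frac{(q;q)_n}{(q;q)_k(q;q)_{n-k}}$ is the $q$-binomial coefficient. The $q$-Appell function $\Phi^{(1)}$ is $$\Phi^{(1)}[a; b, b'; c; x, y] = \sum_{m, n \geq 0} \frac{(a; q)_{m+n} (b; q)_m (b'; q)_n}{(q; q)_m (q; q)_n (c; q)_{m+n}} x^m y^n.$$ Identities are understood as identities of power series in $x,y$ (formal, or convergent for small $|x|,|y|$), with complex parameters chosen so that no denominator occurring vanishes. *)

(* Complex numbers are modelled as R[i] = complex R for a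
   real closed field R (R = the reals gives the usual complex numbers). *)
From mathcomp Require Import all_boot all_order all_algebra.
From mathcomp Require Export complex.
Set Implicit Arguments. Unset Strict Implicit. Unset Printing Implicit Defensive.
Import Order.TTheory GRing.Theory Num.Theory.
Local Open Scope ring_scope.

Section Defs.
Variable C : fieldType.

Definition qpoch (z q : C) (m : nat) : C := \prod_(j < m) (1 - z * q ^+ j).

(* q-binomial coefficient [n choose k]_q (used with 0 <= k <= n) *)
Definition qbinom (q : C) (n k : nat) : C :=
  qpoch q q n / (qpoch q q k * qpoch q q (n - k)).

(* A formal power series in x, y, represented by its coefficient function:
   s m n = coefficient of x^m y^n. *)
Definition series := nat -> nat -> C.

Definition Phi1 (q a b b' c : C) : series := fun m n =>
  qpoch a q (m + n) * qpoch b q m * qpoch b' q n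
  / (qpoch q q m * qpoch q q n * qpoch c q (m + n)).

(* substitution x := t * x in a formal series *)
Definition subst_x (t : C) (s : series) : series := fun m n => t ^+ m * s m n.

(* multiplication of a formal series by the monomial x^i y^j *)
Definition mul_mono (i j : nat) (s : series) : series := fun m n =>
  if (i <= m)%N && (j <= n)%N then s (m - i)%N (n - j)%N else 0.
End Defs.

From mathcomp Require Import all_boot all_order all_algebra.
From mathcomp Require Import complex.
From mathcomp Require Import ring zify.
Set Implicit Arguments. Unset Strict Implicit. Unset Printing Implicit Defensive.
Import Order.TTheory GRing.Theory Num.Theory.
Local Open Scope ring_scope.

(* The (m, p) coefficient of Phi1[A; b, b'; c; x, y] is (A;q)_(m+p) times a
   factor not depending on A.  By induction on n and the q-Pascal rules,
   (a q^n;q)_N and (a q^-n;q)_N expand in the products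
   (a' q^k;q)_(N-k) (q^(N-k+1);q)_k, and the q-Chu-Vandermonde identity splits
   (q^(m+p-k+1);q)_k into a q-weighted sum over i of
   (q^(m-k+i+1);q)_(k-i) (q^(p-i+1);q)_i.
   Each resulting term is exactly the (m, p) coefficient of
   x^(k-i) y^i Phi1[a'; b q^(k-i), b' q^i; c q^k; x q^i, y]. *)

Section QSeries.
Variables (F : fieldType) (q : F).

Lemma qpoch0 z : qpoch z q 0 = 1.
Proof. by rewrite /qpoch big_ord0. Qed.

Lemma qpoch0n m : qpoch 0 q m = 1.
Proof. by apply: big1 => j _; rewrite mul0r subr0. Qed.

Lemma qpochS z m : qpoch z q m.+1 = qpoch z q m * (1 - z * q ^+ m).
Proof. by rewrite /qpoch big_ord_recr. Qed.

Lemma qpochD z m l : qpoch z q (m + l) = qpoch z q m * qpoch (z * q ^+ m) q l.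
Proof.
elim: l => [|l IHl]; first by rewrite addn0 qpoch0 mulr1.
by rewrite addnS !qpochS IHl exprD !mulrA.
Qed.

Lemma qpochSl z m : qpoch z q m.+1 = (1 - z) * qpoch (z * q) q m.
Proof. by rewrite -add1n qpochD /qpoch big_ord1 expr0 mulr1. Qed.

Lemma qpoch_mulq z m :
  qpoch (z * q) q m = qpoch z q m + (1 - q ^+ m) * z * qpoch (z * q) q m.-1.
Proof.
case: m => [|m]; first by rewrite !qpoch0 expr0 subrr !mul0r addr0.
by rewrite /= qpochS qpochSl exprS; ring.
Qed.

Lemma qpoch_qS m : qpoch q q m.+1 = qpoch q q m * (1 - q ^+ m.+1).
Proof. by rewrite qpochS exprS. Qed.

Lemma qpoch_neq0 c (hc : forall j, 1 - c * q ^+ j != 0) k m :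
  qpoch (c * q ^+ k) q m != 0.
Proof. by apply/prodf_neq0 => j _; rewrite -mulrA -exprD hc. Qed.

(* The q-falling factorial (q^(m-j+1);q)_j = (q;q)_m / (q;q)_(m-j). *)
Definition qffact m j := \prod_(t < j) (1 - q ^+ (m - t)).

Lemma qffact0 m : qffact m 0 = 1.
Proof. by rewrite /qffact big_ord0. Qed.

Lemma qffactS m j : qffact m j.+1 = qffact m j * (1 - q ^+ (m - j)).
Proof. by rewrite /qffact big_ord_recr. Qed.

Lemma qffact_small m j : (m < j)%N -> qffact m j = 0.
Proof.
rewrite /qffact => ltmj; apply/eqP; rewrite prodf_seq_eq0.
by apply/hasP; exists (Ordinal ltmj); rewrite ?mem_index_enum //= subnn expr0 subrr.
Qed.

Lemma qffact_qpoch m j : (j <= m)%N -> qffact m j * qpoch q q (m - j) = qpoch q q m.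
Proof.
elim: j => [|j IHj] ltjm; first by rewrite qffact0 subn0 mul1r.
rewrite qffactS -IHj 1?ltnW // -(subnSK ltjm) qpoch_qS; ring.
Qed.

Hypothesis q_neq_root1 : forall j, 1 - q ^+ j.+1 != 0.

Lemma qpoch_q_neq0 m : qpoch q q m != 0.
Proof. by apply/prodf_neq0 => j _; rewrite -exprS q_neq_root1. Qed.

(* [qbinom] extended by zero beyond [n], so that Pascal's rules hold for all [k]. *)
Definition gbinom n k := if (k <= n)%N then qbinom q n k else 0.

Lemma gbinom_small n k : (n < k)%N -> gbinom n k = 0.
Proof. by rewrite /gbinom ltnNge => /negbTE ->. Qed.

Lemma gbinom0 n : gbinom n 0 = 1.
Proof. by rewrite /gbinom /qbinom subn0 qpoch0 mul1r divff ?qpoch_q_neq0. Qed.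

Lemma gbinomnn n : gbinom n n = 1.
Proof. by rewrite /gbinom leqnn /qbinom subnn qpoch0 mulr1 divff ?qpoch_q_neq0. Qed.

Lemma gbinom_pascal n k :
  gbinom n.+1 k.+1 = q ^+ k.+1 * gbinom n k.+1 + gbinom n k /\
  gbinom n.+1 k.+1 = gbinom n k.+1 + q ^+ (n - k) * gbinom n k.
Proof.
case: (ltngtP k n) => [ltkn|ltnk|->]; last first.
- by rewrite !gbinomnn gbinom_small // subnn expr0; split; ring.
- by rewrite !gbinom_small //; [split; ring | lia..].
have [r ->] : exists r, n = (k + r).+1 by exists (n - k.+1)%N; lia.
rewrite /gbinom !ifT; try lia.
have qkr : q ^+ (k + r).+2 = q ^+ k.+1 * q ^+ r.+1 by rewrite -exprD addSn addnS.
rewrite /qbinom !subSS addKn subSn ?leq_addr // addKn !qpoch_qS qkr.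
by split; field; rewrite !qpoch_q_neq0 !q_neq_root1.
Qed.

Lemma sum_gbinomS n (w : nat -> F) :
  \sum_(0 <= i < n.+2) gbinom n.+1 i * w i =
  \sum_(0 <= i < n.+1) gbinom n i * (q ^+ i * w i + w i.+1).
Proof.
rewrite big_nat_recl // gbinom0.
under eq_bigr => i _ do rewrite (proj1 (gbinom_pascal n i)) mulrDl.
under [RHS]eq_bigr => i _ do rewrite mulrDr mulrA.
rewrite !big_split /= addrA; congr (_ + _).
rewrite [in RHS]big_nat_recl // big_nat_recr //= gbinom0 gbinom_small //.
rewrite mulr0 mul0r addr0 expr0 !mul1r; congr (_ + _).
by apply: eq_bigr => i _; rewrite (mulrC (gbinom _ _)).
Qed.

Lemma sum_gbinomS' n (w : nat -> F) :
  \sum_(0 <= i < n.+2) gbinom n.+1 i * w i =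
  \sum_(0 <= i < n.+1) gbinom n i * (w i + q ^+ (n - i) * w i.+1).
Proof.
rewrite big_nat_recl // gbinom0.
under eq_bigr => i _ do rewrite (proj2 (gbinom_pascal n i)) mulrDl.
under [RHS]eq_bigr => i _ do rewrite mulrDr mulrA.
rewrite !big_split /= addrA; congr (_ + _); last first.
  by apply: eq_bigr => i _; rewrite (mulrC (gbinom _ _)).
by rewrite [in RHS]big_nat_recl // big_nat_recr //= gbinom0 gbinom_small // mul0r addr0.
Qed.

Lemma qpoch_mulXn a n N :
  qpoch (a * q ^+ n) q N =
  \sum_(0 <= k < n.+1) gbinom n k *
    (q ^+ (2 * 'C(k, 2)) * a ^+ k * qpoch (a * q ^+ k) q (N - k) * qffact N k).
Proof.
elim: n a => [|n IHn] a.
  by rewrite big_nat1 gbinom0 qffact0 subn0 !expr0 !mulr1 !mul1r.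
rewrite exprS mulrA IHn sum_gbinomS; apply: eq_bigr => k _; congr (_ * _).
have qC2 : q ^+ (2 * 'C(k.+1, 2)) = q ^+ (2 * 'C(k, 2)) * q ^+ k * q ^+ k.
  by rewrite binS bin1 mulnDr exprD [(2 * k)%N]mul2n -addnn exprD mulrA.
have -> : a * q * q ^+ k = a * q ^+ k * q by rewrite -mulrA -exprS exprSr mulrA.
have -> : a * q ^+ k.+1 = a * q ^+ k * q by rewrite exprSr mulrA.
rewrite qpoch_mulq qffactS -subnS qC2 exprMn exprSr; ring.
Qed.

Lemma qpoch_mulVXn (q_neq0 : q != 0) a n N :
  qpoch (a / q ^+ n) q N =
  \sum_(0 <= k < n.+1) gbinom n k *
    (q ^+ 'C(k, 2) / q ^+ (n * k) * (- a) ^+ k * qpoch a q (N - k) * qffact N k).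
Proof.
elim: n a => [|n IHn] a.
  by rewrite big_nat1 gbinom0 qffact0 subn0 !expr0 !invr1 !mulr1 !mul1r.
rewrite exprS invfM mulrA IHn sum_gbinomS'.
apply: eq_big_nat => k /andP[_ lekn]; congr (_ * _).
have aq : qpoch (a / q) q (N - k) =
    qpoch a q (N - k) - (1 - q ^+ (N - k)) * (a / q) * qpoch a q (N - k.+1).
  by have := qpoch_mulq (a / q) (N - k); rewrite mulfVK // subnS => ->; ring.
have qnk : q ^+ (n.+1 * k) = q ^+ (n * k) * q ^+ k by rewrite mulSn exprD mulrC.
have qnk1 : q ^+ (n.+1 * k.+1) = q ^+ (n * k) * q ^+ k * q ^+ n * q.
  by rewrite mulnS mulSn !exprD exprS; ring.
have qn : q ^+ n = q ^+ (n - k) * q ^+ k by rewrite -exprD subnK.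
rewrite aq qffactS binS bin1 exprD qnk qnk1 qn -mulNr exprMn exprVn exprS.
by field; rewrite q_neq0 !expf_neq0.
Qed.

Lemma qffactD m p k :
  qffact (m + p) k =
  \sum_(0 <= i < k.+1) gbinom k i *
    (q ^+ (i * (m - (k - i))) * qffact m (k - i) * qffact p i).
Proof.
elim: k => [|k IHk].
  by rewrite big_nat1 gbinom0 !qffact0 mul0n expr0 !mulr1.
rewrite qffactS IHk big_distrl sum_gbinomS.
apply: eq_big_nat => i /andP[_ leik]; rewrite -[LHS]mulrA; congr (_ * _).
rewrite subSS (@subSn i k leik) !qffactS mulSn subnS.
have [ltm|lem] := ltnP m (k - i); first by rewrite (qffact_small ltm); ring.
have [ltp|lep] := ltnP p i; first by rewrite (qffact_small ltp); ring.
have -> : (m + p - k = m - (k - i) + (p - i))%N by lia.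
case: (m - (k - i))%N => [|x]; first by rewrite muln0 subrr; ring.
by rewrite mulnS /= !exprD exprS; ring.
Qed.

Lemma Phi1_split_a a b b' c m p :
  Phi1 q a b b' c m p = qpoch a q (m + p) * Phi1 q 0 b b' c m p.
Proof. by rewrite /Phi1 qpoch0n mul1r !mulrA. Qed.

Lemma coef_mul_mono_Phi1 A b b' c k i m p (hc : forall j, 1 - c * q ^+ j != 0) :
  (i <= k)%N ->
  qpoch b q (k - i) * qpoch b' q i / qpoch c q k *
    mul_mono (k - i) i (subst_x (q ^+ i)
      (Phi1 q A (b * q ^+ (k - i)) (b' * q ^+ i) (c * q ^+ k))) m p =
  Phi1 q 0 b b' c m p * qpoch A q (m + p - k) *
    (q ^+ (i * (m - (k - i))) * qffact m (k - i) * qffact p i).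
Proof.
move=> leik; rewrite /mul_mono /subst_x.
case: ifP => [/andP[lejm leip] | /negbT]; last first.
  by rewrite negb_and -!ltnNge => /orP[] /qffact_small ->; rewrite !(mulr0, mul0r).
move: lejm; have [j {leik}->] : exists j, k = (j + i)%N by exists (k - i)%N; rewrite subnK.
rewrite addnK => lejm.
have [m' ->] : exists m', m = (j + m')%N by exists (m - j)%N; rewrite subnKC.
have [p' ->] : exists p', p = (i + p')%N by exists (p - i)%N; rewrite subnKC.
have qffact_add l r : qffact (l + r) l = qpoch q q (l + r) / qpoch q q r.
  by rewrite -(qffact_qpoch (leq_addr r l)) addKn mulfK ?qpoch_q_neq0.
have -> : (j + m' + (i + p') - (j + i) = m' + p')%N by lia.
rewrite !addKn /Phi1 qpoch0n addnACA (qpochD c (j + i)) (qpochD b j) (qpochD b' i).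
rewrite !qffact_add -exprM.
have := qpoch_neq0 hc 0 (j + i); rewrite expr0 mulr1 => cji.
have := qpoch_neq0 hc (j + i) (m' + p') => cmp.
by field; rewrite cji cmp !qpoch_q_neq0.
Qed.

Lemma Phi1_expand A (d A' : nat -> F) b b' c n (hc : forall j, 1 - c * q ^+ j != 0)
    (hA : forall N, qpoch A q N = \sum_(0 <= k < n.+1)
            gbinom n k * (d k * qpoch (A' k) q (N - k) * qffact N k)) m p :
  Phi1 q A b b' c m p =
  \sum_(k < n.+1) \sum_(i < k.+1)
    (qbinom q n k * qbinom q k i * (qpoch b q (k - i) * qpoch b' q i / qpoch c q k) * d k)
    * mul_mono (k - i) i (subst_x (q ^+ i)
        (Phi1 q (A' k) (b * q ^+ (k - i)) (b' * q ^+ i) (c * q ^+ k))) m p.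
Proof.
rewrite Phi1_split_a hA mulrC big_distrr big_mkord; apply: eq_bigr => -[k /= ltkn] _.
rewrite qffactD !big_distrr big_mkord; apply: eq_bigr => -[i /= ltik] _.
have := @coef_mul_mono_Phi1 (A' k) b b' c k i m p hc ltik.
set r := _ / _; set T := mul_mono _ _ _ _ _ => coefT.
rewrite /gbinom (ltkn : (k <= n)%N) (ltik : (i <= k)%N).
transitivity (qbinom q n k * qbinom q k i * d k * (r * T)); last by ring.
by rewrite coefT; ring.
Qed.

End QSeries.

Lemma norm_lt1_expr_neq1 (R : numDomainType) (x : R) n : `|x| < 1 -> x ^+ n.+1 != 1.
Proof.
move=> ltx1; apply/eqP => xn1; move: ltx1.
by rewrite -(@expr_lt1 _ n.+1) // -normrX xn1 normr1 ltxx.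
Qed.

Local Open Scope complex_scope.

Theorem theorem2 (R : rcfType) (q a b b' c : R[i]) (n : nat)
  (hq0 : 0 < `|q|) (hq1 : `|q| < 1)
  (hc : forall j : nat, 1 - c * q ^+ j != 0) :
  (forall m p : nat,
     Phi1 q (a * q ^+ n) b b' c m p =
     \sum_(k < n.+1) \sum_(i < k.+1)
        (qbinom q n k * qbinom q k i
         * (qpoch b q (k - i) * qpoch b' q i / qpoch c q k)
         * q ^+ (2 * 'C(k, 2)) * a ^+ k)
        * mul_mono (k - i) i
            (subst_x (q ^+ i)
               (Phi1 q (a * q ^+ k) (b * q ^+ (k - i)) (b' * q ^+ i) (c * q ^+ k))) m p)
  /\
  (forall m p : nat,
     Phi1 q (a * q ^- n) b b' c m p =
     \sum_(k < n.+1) \sum_(i < k.+1)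
        (qbinom q n k * qbinom q k i
         * (qpoch b q (k - i) * qpoch b' q i / qpoch c q k)
         * q ^ ('C(k, 2)%:Z - (n * k)%:Z) * (- a) ^+ k)
        * mul_mono (k - i) i
            (subst_x (q ^+ i)
               (Phi1 q a (b * q ^+ (k - i)) (b' * q ^+ i) (c * q ^+ k))) m p).
Proof.
have q_neq0 : q != 0 by rewrite -normr_gt0.
have q_neq_root1 j : 1 - q ^+ j.+1 != 0.
  by rewrite subr_eq0 eq_sym norm_lt1_expr_neq1.
split=> m p.
- rewrite (Phi1_expand q_neq_root1 b b' hc (qpoch_mulXn q_neq_root1 a n)).
  by apply: eq_bigr => k _; apply: eq_bigr => i _; rewrite !mulrA.
- rewrite (Phi1_expand q_neq_root1 b b' hc (qpoch_mulVXn q_neq_root1 q_neq0 a n)).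
  apply: eq_bigr => k _; apply: eq_bigr => i _.
  by rewrite expfzDr // -exprnP -exprnN !mulrA.
Qed.
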